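(* Let $\alpha>0$ and $0<\beta\le\frac14$, and consider the model $Y_i=f(x_i)+V^{1/2}(x_i)\xi_i$, $i=0,\dots,n$, $x_i=i/n$, with $\xi_0,\dots,\xi_n\overset{iid}{\sim}N(0,1)$. For every $\eta\in(0,1)$ there exists $c_\eta>0$ not depending on $n$ such that for all $0<c<c_\eta$, $$\inf_\varphi\left\{\sup_{f\in\mathcal{H}_\alpha,\,V\in\mathcal{V}_0}P_{f,V}\{\varphi=1\}+\sup_{f\in\mathcal{H}_\alpha,\,V\in\mathcal{V}_{1,\beta}(cn^{-\beta})}P_{f,V}\{\varphi=0\}\right\}\ge1-\eta,$$ where the infimum is over all tests $\varphi$, i.e. measurable functions of $(Y_0,\dots,Y_n)$ into $\{0,1\}$.
   Context: $\mathcal{H}_\alpha=\mathcal{H}_\alpha(M)$: functions $g:[0,1]\to\mathbb{R}$ with $|g^{(\lfloor\alpha\rfloor)}(x)-g^{(\lfloor\alpha\rfloor)}(y)|\le M|x-y|^{\alpha-\lfloor\alpha\rfloor}$ for all $x,y\in[0,1]$ and $\|g^{(k)}\|_\infty\le M$ for $k=0,\dots,\lfloor\alpha\rfloor$; $M$ is a fixed sufficiently large constant. $\mathcal{V}_0=\{V:[0,1]\to[0,\infty):V\equiv\sigma^2,\ 0\le\sigma^2\le M\}$; $\mathcal{V}_{1,\beta}(\varepsilon)=\{V\in\mathcal{H}_\beta:V\ge0,\ \|V-\bar V\mathbf 1\|_2\ge\varepsilon\}$ with $\bar V=\int_0^1V$, $\mathbf1\equiv1$, $\|\cdot\|_2$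 the $L^2([0,1])$ norm. $P_{f,V}$ is the law of the data. *)

From HB Require Import structures.
From mathcomp Require Import all_boot all_order all_algebra.
From mathcomp Require Import all_classical all_reals all_analysis.
Set Implicit Arguments. Unset Strict Implicit. Unset Printing Implicit Defensive.
Import Order.TTheory GRing.Theory Num.Theory.
Import numFieldNormedType.Exports.
Local Open Scope classical_set_scope.
Local Open Scope ring_scope.

Section Defs.
Variable R : realType.

Definition in01 (x : R) : Prop := 0 <= x <= 1.

Definition deriv_on01 (g g' : R -> R) : Prop :=
  forall x, in01 x -> forall e : R, 0 < e -> exists2 d : R, 0 < d &
    forall y, in01 y -> 0 < `|y - x| < d ->
      `|(g y - g x) / (y - x) - g' x| < e.

(* floor of alpha, as a natural number (alpha > 0 in the statement) *)
Definition flo (a : R) : nat := `|Num.floor a|%N.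

(* Hoelder class H_alpha(M) of functions on [0,1]:
   D k is the k-th derivative of g on [0,1], k = 0 .. floor(alpha) *)
Definition Hoelder (alpha M : R) (g : R -> R) : Prop :=
  exists D : nat -> R -> R,
    [/\ (forall x, in01 x -> D 0%N x = g x),
        (forall k, (k < flo alpha)%N -> deriv_on01 (D k) (D k.+1)),
        (forall k, (k <= flo alpha)%N -> forall x, in01 x -> `|D k x| <= M) &
        (forall x y, in01 x -> in01 y ->
           `|D (flo alpha) x - D (flo alpha) y|
             <= M * (`|x - y| `^ (alpha - (flo alpha)%:R)))].

Definition Vnull (M : R) (V : R -> R) : Prop :=
  exists2 s2 : R, 0 <= s2 <= M & forall x, in01 x -> V x = s2.

Definition int01 (h : R -> R) : R :=
  fine (\int[lebesgue_measure]_(x in `[0%R, 1%R]) (h x)%:E)%E.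

Definition L2norm01 (h : R -> R) : R := Num.sqrt (int01 (fun x => h x ^+ 2)).

Definition Valt (beta M eps : R) (V : R -> R) : Prop :=
  [/\ Hoelder beta M V, (forall x, in01 x -> 0 <= V x) &
      L2norm01 (fun x => V x - int01 V) >= eps].

(* Expectation of a nonnegative function h of xi = (xi_0,...,xi_{n-1})
   with xi_i iid N(0,1): iterated Lebesgue integral against the standard
   normal density (= integral w.r.t. the product measure, by Tonelli). *)
Fixpoint gauss_expect (n : nat) : (n.-tuple R -> \bar R) -> \bar R :=
  match n with
  | 0%N => fun h => h [tuple]
  | k.+1 => fun h =>
      (\int[lebesgue_measure]_x
         ((normal_pdf 0 1 x)%:E * gauss_expect (fun t => h (cons_tuple x t))))%E
  end.

Definition obs (n : nat) (f V : R -> R) (xi : (n.+1).-tuple R) : (n.+1).-tuple R :=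
  [tuple f (i%:R / n%:R) + Num.sqrt (V (i%:R / n%:R)) * tnth xi i | i < n.+1].

Definition Prob (n : nat) (f V : R -> R) (A : set ((n.+1).-tuple R)) : \bar R :=
  gauss_expect (fun xi => (\1_A (obs f V xi))%:E).

Definition is_test (n : nat) (phi : (n.+1).-tuple R -> bool) : Prop :=
  measurable_fun setT phi.

Definition minimax_risk (n : nat) (alpha beta M eps : R) : \bar R :=
  ereal_inf [set
    (ereal_sup [set @Prob n f V [set y | phi y] | f in Hoelder alpha M & V in Vnull M]
     + ereal_sup [set @Prob n f V [set y | ~~ phi y]
                    | f in Hoelder alpha M & V in Valt beta M eps])%E
   | phi in is_test (n:=n)].

End Defs.

From HB Require Import structures.
From mathcomp Require Import all_boot all_order all_algebra.
From mathcomp Require Import all_classical all_reals all_analysis.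
From mathcomp Require Import ring lra.
Import Order.TTheory GRing.Theory Num.Theory.
Import numFieldNormedType.Exports.
Set Implicit Arguments.
Unset Strict Implicit.
Local Open Scope classical_set_scope.
Local Open Scope ring_scope.

(* With f = 0, a variance that vanishes at every design point i/n yields the
   data Y = 0 almost surely, exactly as the null variance sigma^2 = 0 does; so
   for every test one of the two error probabilities equals 1.  Such an
   alternative is V(x) = n^(-beta) sin^2(n pi x): since
   |V x - V y| <= n^(-beta) min(1, 2 n pi |x - y|) <= (2 pi)^beta |x - y|^beta,
   it lies in H_beta(M) once M >= 2 pi, and ||V - Vbar||_2 = n^(-beta) / sqrt 8,
   which is at least c n^(-beta) for c <= 1/4. *)

Section SinWave.
Variable R : realType.

Lemma sin_natrMpi (i : nat) : sin (i%:R * pi) = 0 :> R.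
Proof.
elim: i => [|i IH]; first by rewrite mul0r sin0.
by rewrite -natr1 mulrDl mul1r sinDpi IH oppr0.
Qed.

Lemma sin_lipschitz (a b : R) : `|sin a - sin b| <= `|a - b|.
Proof.
wlog ab : a b / a <= b.
  move=> H; have [|/ltW] := leP a b; first exact: H.
  by rewrite distrC [`|a - b|]distrC; exact: H.
rewrite distrC [`|a - b|]distrC.
have [c _ ->] := MVT_segment ab (fun x _ => is_derive_sin x)
  (continuous_subspaceT (@continuous_sin R)).
by rewrite normrM ler_piMl // ler_norml cos_le1 cos_geN1.
Qed.

Lemma sqr_sin_itv (a : R) : 0 <= sin a ^+ 2 <= 1.
Proof. by rewrite sqr_ge0 -(cos2Dsin2 a) lerDr sqr_ge0. Qed.

Lemma minr1_le_powR (t b : R) : 0 <= t -> 0 <= b <= 1 -> Num.min 1 t <= t `^ b.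
Proof.
move=> t0 /andP[b0 b1]; have [t1|t1] := leP 1 t.
  by rewrite -(powRr0 t) ler_powR.
have [->|tn0] := eqVneq t 0; first exact: powR_ge0.
by apply: ger1_powR => //; rewrite lt0r tn0 t0 ltW.
Qed.

Definition sin2_wave (A k x : R) : R := A * sin (k * x) ^+ 2.

Lemma sin2_wave_ge0 (A k x : R) : 0 <= A -> 0 <= sin2_wave A k x.
Proof. by move=> A0; rewrite mulr_ge0 ?sqr_ge0. Qed.

Lemma sin2_wave_le (A k x : R) : 0 <= A -> sin2_wave A k x <= A.
Proof. by move=> A0; rewrite ler_piMr //; case/andP: (sqr_sin_itv (k * x)). Qed.

Lemma sin2_wave_grid (A : R) (n i : nat) : (0 < n)%N ->
  sin2_wave A (n%:R * pi) (i%:R / n%:R) = 0.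
Proof.
move=> n0; rewrite /sin2_wave.
have -> : n%:R * pi * (i%:R / n%:R) = i%:R * pi :> R.
  by field; rewrite pnatr_eq0 -lt0n.
by rewrite sin_natrMpi expr0n mulr0.
Qed.

Lemma sin2_wave_dist (A k x y : R) : 0 <= A -> 0 <= k ->
  `|sin2_wave A k x - sin2_wave A k y| <= A * Num.min 1 (2 * k * `|x - y|).
Proof.
move=> A0 k0; rewrite /sin2_wave -mulrBr normrM ger0_norm // ler_wpM2l //.
rewrite le_min; apply/andP; split.
  move: (sqr_sin_itv (k * x)) (sqr_sin_itv (k * y)).
  rewrite ler_norml => /andP[x0 x1] /andP[y0 y1].
  by apply/andP; split; lra.
have -> : 2 * k * `|x - y| = k * `|x - y| * 2 by ring.
rewrite subr_sqr normrM ler_pM //.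
  by apply: le_trans (sin_lipschitz _ _) _; rewrite -mulrBr normrM ger0_norm.
apply: le_trans (ler_normD _ _) _.
by move: (sin_max (k * x)) (sin_max (k * y)); lra.
Qed.

Lemma int01_FTC (f F : R -> R) : (forall x, derivable f x 1) ->
  (forall x, derivable F x 1) -> (forall x, F^`()%classic x = f x) ->
  int01 f = F 1 - F 0.
Proof.
have cont (g : R -> R) : (forall x : R, derivable g x 1) -> continuous g.
  by move=> dg x; apply/differentiable_continuous/derivable1_diffP.
move=> df dF dFf; rewrite /int01 (@continuous_FTC2 _ f F) //=.
  exact/continuous_subspaceT/cont.
split=> //; [apply: cvg_at_right_filter|apply: cvg_at_left_filter]; exact: cont.
Qed.

Lemma int01_sin2_wave (A : R) (n : nat) : (0 < n)%N ->
  int01 (sin2_wave A (n%:R * pi)) = A / 2.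
Proof.
move=> n0; set k := n%:R * pi.
have k0 : k != 0 by rewrite gt_eqF // mulr_gt0 ?ltr0n ?pi_gt0.
rewrite (@int01_FTC _ (fun x => A * (x / 2 - sin (k * x) * cos (k * x) / (2 * k)))).
- by rewrite mulr1 mulr0 sin0 sin_natrMpi; field.
- by move=> x; apply: ex_derive.
- by move=> x; apply: ex_derive.
move=> x; rewrite derive1E derive_val /sin2_wave /GRing.scale /=.
have := cos2sin2 (k * x); set s := sin (k * x); set c := cos (k * x) => c2.
transitivity (A * (1 - (c ^+ 2 - s ^+ 2)) / 2); first by field.
by rewrite c2; field.
Qed.

Lemma int01_sqr_sin2_wave_center (A : R) (n : nat) : (0 < n)%N ->
  int01 (fun x => (sin2_wave A (n%:R * pi) x - A / 2) ^+ 2) = A ^+ 2 / 8.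
Proof.
move=> n0; set k := n%:R * pi.
have k0 : k != 0 by rewrite gt_eqF // mulr_gt0 ?ltr0n ?pi_gt0.
rewrite (@int01_FTC _ (fun x => A ^+ 2 / 4 * (x / 2 +
   sin (k * x) * cos (k * x) * (cos (k * x) ^+ 2 - sin (k * x) ^+ 2) / (2 * k)))).
- by rewrite mulr1 mulr0 sin0 sin_natrMpi; field.
- by move=> x; apply: ex_derive.
- by move=> x; apply: ex_derive.
move=> x; rewrite derive1E derive_val /sin2_wave /GRing.scale /=.
have := cos2sin2 (k * x); set s := sin (k * x); set c := cos (k * x) => c2.
transitivity (A ^+ 2 / 4 * (1 / 2 + ((c ^+ 2 - s ^+ 2) ^+ 2 - 4 * s ^+ 2 * c ^+ 2) / 2)).
  by field.
by rewrite c2; field.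
Qed.

Lemma L2norm01_sin2_wave_center (A : R) (n : nat) : 0 <= A -> (0 < n)%N ->
  A / 4 <= L2norm01 (fun x => sin2_wave A (n%:R * pi) x - int01 (sin2_wave A (n%:R * pi))).
Proof.
move=> A0 n0; rewrite /L2norm01 int01_sin2_wave // int01_sqr_sin2_wave_center //.
rewrite -[A / 4]ger0_norm ?divr_ge0 // -sqrtr_sqr ler_sqrt ?mulr_ge0 ?sqr_ge0 //.
by rewrite expr_div_n; have := sqr_ge0 A; nra.
Qed.

End SinWave.

Section HoelderClass.
Variable R : realType.

Lemma flo_lt1 (a : R) : 0 <= a < 1 -> flo a = 0%N.
Proof. by move=> a01; rewrite /flo (@floor_def _ _ 0) //= add0r. Qed.

Lemma Hoelder0 (alpha M : R) : 0 <= M -> Hoelder alpha M (fun _ => 0).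
Proof.
move=> M0; exists (fun _ _ => 0); split => //.
- by move=> k _ x _ e e0; exists 1 => // y _ _; rewrite subrr mul0r subr0 normr0.
- by move=> k _ x _; rewrite normr0.
- by move=> x y _ _; rewrite subrr normr0 mulr_ge0 ?powR_ge0.
Qed.

Lemma Hoelder_flo0 (alpha M : R) (g : R -> R) : flo alpha = 0%N ->
  (forall x, in01 x -> `|g x| <= M) ->
  (forall x y, in01 x -> in01 y -> `|g x - g y| <= M * `|x - y| `^ alpha) ->
  Hoelder alpha M g.
Proof.
move=> fl gM gH; exists (fun _ => g); split => //; rewrite fl //.
by move=> x y x01 y01; rewrite subr0; exact: gH.
Qed.

End HoelderClass.

Section Risk.
Variable R : realType.

Lemma gauss_expect_cst (n : nat) (h : n.-tuple R -> \bar R) (r : R) :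
  (forall t, h t = r%:E) -> gauss_expect h = r%:E.
Proof.
elim: n h => [|n IH] h hh /=; first by rewrite hh.
under eq_integral do rewrite (IH _ (fun t => hh _)).
by rewrite integralZr ?integral_normal_pdf ?mul1e //; exact: integrable_normal_pdf.
Qed.

Lemma Prob_noiseless (n : nat) (f V : R -> R) (A : set ((n.+1).-tuple R)) :
  (forall i : nat, V (i%:R / n%:R) = 0) ->
  Prob f V A = (([tuple f (i%:R / n%:R) | i < n.+1] \in A)%:R)%:E.
Proof.
move=> V0; apply: gauss_expect_cst => xi; rewrite indicE; congr (_ \in A)%:R%:E.
by apply: eq_from_tnth => i; rewrite !tnth_mktuple V0 sqrtr0 mul0r addr0.
Qed.

Lemma minimax_risk_ge1 (n : nat) (alpha beta M eps : R) (V1 : R -> R) :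
  0 <= M -> Valt beta M eps V1 -> (forall i : nat, V1 (i%:R / n%:R) = 0) ->
  (1 <= minimax_risk n alpha beta M eps)%E.
Proof.
move=> M0 V1alt V1grid; apply: le_ereal_inf_tmp => _ [phi _ <-].
set y0 := [tuple (fun _ : R => 0 : R) (i%:R / n%:R) | i < n.+1].
have null_ge : (((y0 \in [set y | phi y])%:R)%:E <=
    ereal_sup [set Prob f V [set y | phi y] | f in Hoelder alpha M & V in Vnull M])%E.
  apply: ereal_sup_ubound; exists (fun _ => 0); first exact: Hoelder0.
  exists (fun _ => 0); first by exists 0; rewrite ?lexx.
  exact: Prob_noiseless.
have alt_ge : (((y0 \in [set y | ~~ phi y])%:R)%:E <=
    ereal_sup [set Prob f V [set y | ~~ phi y] | f in Hoelder alpha M & V in Valt beta M eps])%E.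
  apply: ereal_sup_ubound; exists (fun _ => 0); first exact: Hoelder0.
  by exists V1 => //; exact: Prob_noiseless.
apply: le_trans (leeD null_ge alt_ge).
case E: (phi y0).
  by rewrite mem_set // memNset /= ?E // addr0.
by rewrite memNset /= ?E // mem_set /= ?E // add0r.
Qed.

End Risk.

Section Alternative.
Variables (R : realType) (beta : R) (n : nat).
Hypotheses (beta01 : 0 < beta < 1) (n0 : (0 < n)%N).

Let A := n%:R `^ (- beta).

Let nat_powR_ge1 : 1 <= n%:R `^ beta.
Proof.
have [b0 _] := andP beta01.
by rewrite -[leLHS](powRr0 n%:R); apply: ler_powR; [rewrite ler1n | exact: ltW].
Qed.

Let A_gt0 : 0 < A.
Proof. by rewrite /A powRN invr_gt0 (lt_le_trans ltr01 nat_powR_ge1). Qed.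

Let A_le1 : A <= 1.
Proof. by rewrite /A powRN invf_le1 // (lt_le_trans ltr01 nat_powR_ge1). Qed.

Lemma sin2_wave_Hoelder (M : R) : 2 * pi <= M -> Hoelder beta M (sin2_wave A (n%:R * pi)).
Proof.
move=> piM; have pi2 := pi_ge2 R; have [b0 b1] := andP beta01.
have b01 : 0 <= beta <= 1 by rewrite !ltW.
apply: Hoelder_flo0 => [|x _|x y _ _]; first by rewrite flo_lt1 // ltW.
  rewrite ger0_norm; last exact/sin2_wave_ge0/ltW.
  by apply: le_trans (sin2_wave_le _ _ (ltW A_gt0)) _; have := A_le1; lra.
apply: le_trans (sin2_wave_dist x y (ltW A_gt0) _) _.
  by rewrite mulr_ge0 ?ler0n ?pi_ge0.
apply: le_trans (ler_wpM2l (ltW A_gt0) (minr1_le_powR _ b01)) _.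
  by rewrite !mulr_ge0 ?ler0n ?pi_ge0 ?normr_ge0.
have -> : 2 * (n%:R * pi) * `|x - y| = (2 * pi) * (n%:R * `|x - y|) by ring.
rewrite powRM ?mulr_ge0 ?ler0n ?pi_ge0 // [(n%:R * _) `^ _]powRM ?ler0n //.
have -> : A * ((2 * pi) `^ beta * (n%:R `^ beta * `|x - y| `^ beta)) =
  (2 * pi) `^ beta * `|x - y| `^ beta * (A * n%:R `^ beta) by ring.
rewrite /A powRN mulVf ?mulr1 ?gt_eqF ?(lt_le_trans ltr01 nat_powR_ge1) //.
rewrite ler_wpM2r ?powR_ge0 //.
by apply: le_trans piM; rewrite ler1_powR ?ltW //; lra.
Qed.

Lemma sin2_wave_Valt (M c : R) : 2 * pi <= M -> 0 <= c <= 4^-1 ->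
  Valt beta M (c * A) (sin2_wave A (n%:R * pi)).
Proof.
move=> piM /andP[c0 c4]; split; first exact: sin2_wave_Hoelder.
  by move=> x _; apply/sin2_wave_ge0/ltW.
apply: le_trans _ (L2norm01_sin2_wave_center (ltW A_gt0) n0).
by rewrite mulrC ler_pM2l.
Qed.

End Alternative.

Theorem proposition3p3 (R : realType) (alpha beta : R) :
  0 < alpha -> 0 < beta <= 4^-1 ->
  exists M0 : R, forall M : R, M0 <= M ->
  forall eta : R, 0 < eta < 1 ->
  exists2 c_eta : R, 0 < c_eta &
  forall c : R, 0 < c < c_eta ->
  forall n : nat, (0 < n)%N ->
    ((1 - eta)%:E <= minimax_risk n alpha beta M (c * n%:R `^ (- beta)))%E.
Proof.
move=> _ /andP[b0 b4].
exists (2 * pi) => M piM eta /andP[eta0 _]; exists 4^-1 => // c /andP[c0 c4] n n0.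
have b01 : 0 < beta < 1 by rewrite b0 /=; lra.
have M0 : 0 <= M by have := pi_ge2 R; lra.
have c01 : 0 <= c <= 4^-1 by rewrite !ltW.
apply: le_trans (minimax_risk_ge1 alpha M0 (sin2_wave_Valt b01 n0 piM c01)
  (fun i => sin2_wave_grid _ i n0)).
by rewrite lee_fin; lra.
Qed.
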